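(* Fix an integer $r\ge2$, $\varepsilon,s>0$, $\gamma=(\gamma_1,\dots,\gamma_r)$ with $\gamma_i\in(0,1)$, $\sum_i\gamma_i=1$, $i^\star=\arg\max_i\gamma_i$, and let $\Psi=\left(\frac{\gamma_{i^\star}\log d}{d\,r^{r-1}(r-1)\prod_{i=1}^r\gamma_i}\right)^{1/(r-1)}$. Let $d=d(\varepsilon,s,\gamma,r)$ be sufficiently large, and for each $i\in[r]$ fix $S_i\subseteq V_i$ with $|S_i|\le s\gamma_i r n\Psi$. Then for $p=d/n^{r-1}$, with probability $1-\exp(-\Omega(n))$ there is no independent set $S'$ of $\mathcal{H}(r,n,p)$ satisfying $|S'\cap S_i|\ge\varepsilon\gamma_i r n\Psi$ for every $1\le i\le r$.
   Context: $\mathcal{H}(r,n,p)$: random $r$-uniform $r$-partite hypergraph with vertex set $[n]\times[r]$, parts $V_i=[n]\times\{i\}$, each $e\in V_1\times\cdots\times V_r$ an edge independently with probability $p$. An independent set is a vertex set containing no edge. *)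

From HB Require Import structures.
From mathcomp Require Import all_boot all_order all_algebra.
From mathcomp Require Import all_classical all_reals all_analysis.
Set Implicit Arguments. Unset Strict Implicit. Unset Printing Implicit Defensive.
Import Order.TTheory GRing.Theory Num.Theory.
Local Open Scope ring_scope.

(* Vertex set [n] x [r] is 'I_n * 'I_r; part V_i = [n] x {i}. *)
Definition part (n r : nat) (i : 'I_r) : {set 'I_n * 'I_r} :=
  [set v | v.2 == i].

(* An edge e in V_1 x ... x V_r is encoded by e : 'I_r -> 'I_n,
   meaning the vertices (e i, i); a hypergraph is a set of such edges. *)
Definition edge (n r : nat) := {ffun 'I_r -> 'I_n}.

Definition independent (n r : nat) (G : {set edge n r}) (S' : {set 'I_n * 'I_r}) : bool :=
  [forall e in G, ~~ [forall i, (e i, i) \in S']].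

(* Probability of an event A under H(r,n,p): each of the n^r potential edges
   is present independently with probability p. *)
Definition hprob (R : realType) (n r : nat) (p : R) (A : pred {set edge n r}) : R :=
  \sum_(G : {set edge n r} | A G) p ^+ #|G| * (1 - p) ^+ #|~: G|.

Definition Psi (R : realType) (r : nat) (gam : 'I_r -> R) (istar : 'I_r) (d : R) : R :=
  powR (gam istar * ln d /
        (d * r%:R ^+ r.-1 * (r%:R - 1) * \prod_(i < r) gam i))
       (1 / (r%:R - 1)).

From HB Require Import structures.
From mathcomp Require Import all_boot all_order all_algebra.
From mathcomp Require Import all_classical all_reals all_analysis.
From mathcomp Require Import ring lra.
Set Implicit Arguments. Unset Strict Implicit. Unset Printing Implicit Defensive.
Import Order.TTheory GRing.Theory Num.Theory.
Local Open Scope ring_scope.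

(* First moment method.  If S' is independent and meets each S_i in at least
   b_i := eps gam_i r n Psi vertices, so does T := S' :&: U with U the union of
   the S_i; T spans at least prod_i b_i potential edges, all absent, which has
   probability (1 - p)^(prod_i b_i) <= exp (- p prod_i b_i).  A union bound over
   the at most 2^|U| <= 2^(s r n Psi) subsets T of U leaves the exponent
   n r Psi (s ln 2 - eps^r gam_istar ln d / (r - 1)), because the definition of
   Psi makes p prod_i b_i linear in n; it is negative once d is large. *)

Lemma expR_ge_pow_1B (R : realType) (x : R) k : 0 <= x <= 1 ->
  (1 - x) ^+ k <= expR (- (x * k%:R)).
Proof.
move=> /andP [_ x1]; rewrite mulrC -mulrN expRM_natl lerXn2r ?nnegrE ?expR_ge0 //.
  by rewrite subr_ge0.
exact: expR_ge1Dx.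
Qed.

Section RandomHypergraph.
Variables (R : realType) (n r : nat).
Implicit Types (p : R) (G E : {set edge n r}) (T : {set 'I_n * 'I_r}).

Definition edges_in T : {set edge n r} := [set e : edge n r | [forall i, (e i, i) \in T]].

Lemma independentE G T : independent G T = [disjoint G & edges_in T].
Proof.
rewrite finset.disjoints_subset; apply/forall_inP/fintype.subsetP => H e eG.
  by rewrite !inE; apply: H.
by have := H e eG; rewrite !inE.
Qed.

Lemma independentS G T T' : T \subset T' -> independent G T' -> independent G T.
Proof.
move=> sTT'; rewrite !independentE; apply: disjointWr.
by apply/fintype.subsetP => e; rewrite !inE => /forallP Te; apply/forallP => i;
  apply: (fintype.subsetP sTT'); apply: Te.
Qed.

Lemma card_edges_in T :
  #|edges_in T| = (\prod_(i < r) #|[set x : 'I_n | (x, i) \in T]|)%N.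
Proof.
rewrite -(@eq_card _ (family (fun i => [pred x : 'I_n | (x, i) \in T]))).
  rewrite card_family foldrE big_map big_enum /=.
  by apply: eq_bigr => i _; apply: eq_card => x; rewrite inE.
move=> e; rewrite [in RHS]inE; apply/familyP/forallP => H i; move: (H i); by rewrite inE.
Qed.

Lemma card_setI_part_le T (S : {set 'I_n * 'I_r}) (i : 'I_r) : S \subset part n i ->
  (#|T :&: S| <= #|[set x : 'I_n | (x, i) \in T]|)%N.
Proof.
move=> /fintype.subsetP SP; apply: leq_trans (leq_imset_card (pair^~ i) _).
apply: subset_leq_card; apply/fintype.subsetP => -[x j]; rewrite inE => /andP [xT xS].
have /[!inE]/eqP /= ji := SP _ xS; subst j.
by apply/imsetP; exists x; rewrite ?inE.
Qed.

Lemma card_edges_in_ge T (S : 'I_r -> {set 'I_n * 'I_r}) :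
  (forall i, S i \subset part n i) ->
  (\prod_(i < r) #|T :&: S i| <= #|edges_in T|)%N.
Proof.
by move=> SP; rewrite card_edges_in; apply: leq_prod => i _; apply: card_setI_part_le.
Qed.

Lemma hprob_weightE p G :
  p ^+ #|G| * (1 - p) ^+ #|~: G| = \prod_e (if e \in G then p else 1 - p).
Proof.
rewrite (bigID (mem G)) /=.
rewrite (eq_bigr (fun=> p)) ?prodr_const; last by move=> e ->.
rewrite (eq_bigr (fun=> 1 - p)) ?prodr_const; last by move=> e /negbTE ->.
by congr (_ * _ ^+ _); apply: eq_card => e; rewrite inE.
Qed.

Lemma hprob_weight_ge0 p G : 0 <= p <= 1 -> 0 <= p ^+ #|G| * (1 - p) ^+ #|~: G|.
Proof. by move=> /andP [p0 p1]; rewrite mulr_ge0 ?exprn_ge0 ?subr_ge0. Qed.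

(* Expand the product over edges: an edge of E contributes [0 + (1 - p)], any
   other edge [p + (1 - p)]. *)
Lemma hprob_disjoint p E : hprob p (fun G => [disjoint G & E]) = (1 - p) ^+ #|E|.
Proof.
pose f e := if e \in E then 0 else p.
transitivity (\sum_(G : {set edge n r}) \prod_(e : edge n r) (if e \in G then f e else 1 - p)).
  rewrite /hprob [RHS](bigID (fun G => [disjoint G & E])) /=.
  rewrite [X in _ = _ + X]big1 ?addr0 => [|G /pred0Pn [e /andP [eG eE]]].
    apply: eq_bigr => G dGE; rewrite hprob_weightE; apply: eq_bigr => e _.
    case: ifP => // eG; rewrite /f; case: ifP => // eE.
    by move/pred0P: dGE => /(_ e); rewrite /= eG eE.
  by rewrite (bigD1 e) //= (eG : e \in G) /f (eE : e \in E) mul0r.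
rewrite -(bigA_distr 1 +%R f (fun=> 1 - p)) (bigID (mem E)) /= /f.
rewrite (eq_bigr (fun=> 1 - p)) ?prodr_const ?cardsE; last by move=> e ->; rewrite add0r.
by rewrite big1 ?mulr1 // => e /negbTE ->; rewrite subrKC.
Qed.

Lemma hprob_independent p T :
  hprob p (fun G => independent G T) = (1 - p) ^+ #|edges_in T|.
Proof. by rewrite -hprob_disjoint /hprob; apply: eq_bigl => G; rewrite independentE. Qed.

Lemma hprob_union_bound p (I : finType) (P : pred I) (A : pred {set edge n r})
  (B : I -> pred {set edge n r}) : 0 <= p <= 1 ->
  (forall G, A G -> exists2 k, P k & B k G) ->
  hprob p A <= \sum_(k | P k) hprob p (B k).
Proof.
move=> p01 AB; rewrite /hprob (exchange_big_dep predT) //= [leRHS](bigID A) /=.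
rewrite -[leLHS]addr0 lerD ?sumr_ge0 // => [|G _]; last first.
  by rewrite sumr_ge0 // => k _; apply: hprob_weight_ge0.
apply: ler_sum => G AG; have [k Pk BkG] := AB G AG.
rewrite (bigD1 k) /= ?Pk ?BkG // lerDl sumr_ge0 // => k' _.
exact: hprob_weight_ge0.
Qed.

Lemma hprob_dense_independent_le p (S : 'I_r -> {set 'I_n * 'I_r}) (b : 'I_r -> R) :
  0 <= p <= 1 -> (forall i, S i \subset part n i) -> (forall i, 0 <= b i) ->
  hprob p (fun G => [exists S', independent G S' &&
                                [forall i, b i <= #|S' :&: S i|%:R]])
  <= 2 ^+ (\sum_i #|S i|) * expR (- (p * \prod_i b i)).
Proof.
move=> p01 SP b0; set U := \bigcup_i S i.
pose dense T := [forall i, b i <= #|T :&: S i|%:R].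
have cover G : [exists S', independent G S' && dense S'] ->
    exists2 T, (T \in powerset U) && dense T & independent G T.
  move=> /existsP [S' /andP [iS' /forallP dS']]; exists (S' :&: U).
    rewrite powersetE subsetIr /=; apply/forallP => i.
    by rewrite -finset.setIA (finset.setIidPr (finset.bigcup_sup i _)).
  exact: independentS (subsetIl _ _) iS'.
have term_le T : dense T ->
    hprob p (fun G => independent G T) <= expR (- (p * \prod_i b i)).
  move=> /forallP dT; rewrite hprob_independent.
  apply: le_trans (expR_ge_pow_1B _ p01) _; rewrite ler_expR lerN2.
  rewrite ler_wpM2l //; first by case/andP: p01.
  apply: le_trans (_ : \prod_i #|T :&: S i|%:R <= _).
    by apply: ler_prod => i _; rewrite b0 dT.
  by rewrite -natr_prod ler_nat card_edges_in_ge.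
apply: le_trans (hprob_union_bound p01 cover) _.
apply: le_trans (_ : \sum_(T in powerset U) expR (- (p * \prod_i b i)) <= _).
  rewrite big_mkcondr /= ler_sum // => T _.
  by case: ifP => [/term_le //|_]; apply: expR_ge0.
rewrite sumr_const card_powerset -[leLHS]mulr_natl ler_wpM2r ?expR_ge0 //.
by rewrite natrX ler_eXn2l ?ltr1n // unstable.card_big_setU.
Qed.

End RandomHypergraph.

Section Psi.
Variables (R : realType) (m : nat) (gam : 'I_m.+1 -> R) (istar : 'I_m.+1).
Hypotheses (m_gt0 : (0 < m)%N) (gam_gt0 : forall i, 0 < gam i).

Let P_gt0 : 0 < \prod_i gam i.
Proof. by apply: prodr_gt0 => i _. Qed.

Lemma Psi_gt0 d : 1 < d -> 0 < Psi gam istar d.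
Proof.
move=> d1; rewrite powR_gt0 // divr_gt0 ?mulr_gt0 ?ln_gt0 ?exprn_gt0 //; try lra.
by rewrite -natr1 addrK ltr0n.
Qed.

Lemma Psi_exprn d : 1 <= d ->
  Psi gam istar d ^+ m = gam istar * ln d / (d * m.+1%:R ^+ m * m%:R * \prod_i gam i).
Proof.
move=> d1; rewrite /Psi -natr1 addrK -powR_mulrn ?powR_ge0 // -powRrM mul1r.
rewrite mulVf ?powRr1 ?pnatr_eq0 -?lt0n //.
by rewrite divr_ge0 ?mulr_ge0 ?ln_ge0 ?exprn_ge0 ?ler0n ?(ltW P_gt0) ?(ltW (gam_gt0 _)) //; lra.
Qed.

(* [p * prod_i b_i] of the first moment bound, for p = d / x^(r-1) and
   b_i = eps gam_i r x Psi: the exponent in Psi is what makes it linear in x. *)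
Lemma Psi_first_moment d (eps x : R) : 1 <= d -> x != 0 ->
  d / x ^+ m * \prod_i (eps * gam i * m.+1%:R * x * Psi gam istar d)
  = x * (m.+1%:R * Psi gam istar d * (eps ^+ m.+1 * gam istar * ln d / m%:R)).
Proof.
move=> d1 x0.
rewrite (eq_bigr (fun i => gam i * (eps * m.+1%:R * x * Psi gam istar d))); last first.
  by move=> i _; ring.
rewrite big_split prodr_const card_ord /= !exprS !exprMn Psi_exprn //.
field; rewrite pnatr_eq0 -lt0n m_gt0 (gt_eqF P_gt0) !expf_eq0 (negbTE x0) pnatr_eq0 !andbF /=.
by rewrite gt_eqF //; lra.
Qed.

End Psi.

Lemma exp2_le_expR (R : realType) (k : nat) (y : R) :
  k%:R <= y -> 2 ^+ k <= expR (y * ln 2).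
Proof.
move=> ky; have <- : expR (k%:R * ln 2) = 2 ^+ k :> R by rewrite expRM_natl lnK // posrE.
by rewrite ler_expR ler_wpM2r // ln_ge0 //; lra.
Qed.

Lemma ln_gap_expR (R : realType) (a q d : R) : 0 <= a -> 0 < q ->
  expR (a / q + 1) <= d -> 1 < d /\ a < q * ln d.
Proof.
move=> a_ge0 q_gt0 d_ge; have aq_ge0 : 0 <= a / q by rewrite divr_ge0 // ltW.
have d_gt1 : 1 < d by apply: lt_le_trans d_ge; rewrite expR_gt1; lra.
split=> //; rewrite mulrC -ltr_pdivrMr //.
by apply: lt_le_trans (_ : a / q + 1 <= _); rewrite ?ltrDl // -ler_expR lnK // posrE; lra.
Qed.

Lemma div_exprn_in01 (R : realType) (m : nat) (d x : R) : (0 < m)%N ->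
  0 <= d -> d <= x -> 1 <= x -> 0 <= d / x ^+ m <= 1.
Proof.
move=> m_gt0 d_ge0 dx x_ge1; have x_le : x <= x ^+ m by rewrite ler_eXnr.
by rewrite divr_ge0 ?exprn_ge0 ?ler_pdivrMr ?exprn_gt0 //=; lra.
Qed.

Theorem mainTheorem19 (R : realType) (r : nat) (eps s : R)
  (gam : 'I_r -> R) (istar : 'I_r) :
  (2 <= r)%N -> 0 < eps -> 0 < s ->
  (forall i, 0 < gam i < 1) -> \sum_(i < r) gam i = 1 ->
  (forall i, gam i <= gam istar) ->
  exists d0 : R, forall d : R, d0 <= d ->
    exists c : R, 0 < c /\
    exists n0 : nat, forall n : nat, (n0 <= n)%N ->
      forall S : 'I_r -> {set 'I_n * 'I_r},
        (forall i, S i \subset part n i) ->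
        (forall i, #|S i|%:R <= s * gam i * r%:R * n%:R * Psi gam istar d) ->
        hprob (d / n%:R ^+ r.-1)
          (fun G : {set edge n r} =>
             [exists S' : {set 'I_n * 'I_r},
               independent G S' &&
               [forall i, eps * gam i * r%:R * n%:R * Psi gam istar d
                            <= #|S' :&: S i|%:R]])
        <= expR (- (c * n%:R)).
Proof.
case: r gam istar => [//|m] gam istar /[!ltnS] m_gt0 eps_gt0 s_gt0 gam01 gam_sum _.
have gam_gt0 i : 0 < gam i by case/andP: (gam01 i).
have m_pos : 0 < m%:R :> R by rewrite ltr0n.
have q_gt0 : 0 < eps ^+ m.+1 * gam istar by rewrite mulr_gt0 ?exprn_gt0.
have a_ge0 : 0 <= s * ln 2 * m%:R by rewrite !mulr_ge0 ?ln_ge0 ?ltW //; lra.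
exists (expR (s * ln 2 * m%:R / (eps ^+ m.+1 * gam istar) + 1)).
move=> d /(ln_gap_expR a_ge0 q_gt0) [d_gt1 gap].
set Ψ := Psi gam istar d; have Psi_pos : 0 < Ψ by apply: Psi_gt0.
exists (m.+1%:R * Ψ * (eps ^+ m.+1 * gam istar * ln d / m%:R - s * ln 2)).
split; first by rewrite !mulr_gt0 ?subr_gt0 ?ltr0n // ltr_pdivlMr // mulrC.
exists (Num.truncn d).+1 => k k_ge S S_part S_le.
have d_lt_k : d < k%:R by apply: lt_le_trans (truncnS_gt d) _; rewrite ler_nat.
have k_gt0 : (0 < k)%N by rewrite -(ltr0n R); lra.
have p01 : 0 <= d / k%:R ^+ m <= 1 by apply: div_exprn_in01; rewrite ?ler1n //; lra.
have sum_le : (\sum_i #|S i|)%:R <= s * m.+1%:R * k%:R * Ψ.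
  rewrite natr_sum; apply: le_trans (ler_sum _ (fun i _ => S_le i)) _.
  rewrite (eq_bigr (fun i => s * m.+1%:R * k%:R * Ψ * gam i)) => [|i _]; last by ring.
  by rewrite -mulr_sumr gam_sum mulr1.
apply: le_trans (hprob_dense_independent_le p01 S_part _) _ => [i|].
  by rewrite !mulr_ge0 ?ler0n ?ltW.
rewrite Psi_first_moment ?(ltW d_gt1) ?pnatr_eq0 -?lt0n //.
apply: le_trans (ler_wpM2r (expR_ge0 _) (exp2_le_expR sum_le)) _.
rewrite -expRD ler_expR le_eqVlt -/Ψ; apply/orP; left; apply/eqP.
by ring.
Qed.
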